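(* For non-negative integers $l,m$ and sufficiently large odd primes $r$ define $$H_{l,m}(r)=\frac{\left(\frac{r-1}{2}\right)!}{\left(\frac{r-1}{2}-l+m\right)!}\,(-1)^{m+1}\,\sigma_m\!\left(1,2,\dots,\tfrac{r-1}{2}-l+m-1\right).$$ Then $H_{l,m}$ is a Fermat function, and its residue $g'_{l,m}$ lies in $\mathbb{Z}_{(m+2)}[\frac12]$.
   Context: $\sigma_j(x_1,\dots,x_k)$ is the $j$-th elementary symmetric polynomial, $\sigma_0=1$. $\mathbb{Z}_{(m)}=\mathbb{Z}[\frac12,\dots,\frac1{m-1}]$ for $m\ge3$ and $\mathbb{Z}_{(m)}=\mathbb{Z}$ for $m\le2$. A function $f$ assigning to each sufficiently large prime $r$ a rational number $f(r)$ lying in the $r$-adic integers is called a Fermat function if there is a rational number $\lambda$ with $f(r)\equiv \lambda\pmod r$ (i.e. same first $r$-adic digit) for all sufficiently large primes $r$; such $\lambda$ is unique and is called the residue of $f$. *)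

From HB Require Import structures.
From mathcomp Require Import all_boot all_order all_algebra.
Set Implicit Arguments. Unset Strict Implicit. Unset Printing Implicit Defensive.
Import Order.TTheory GRing.Theory Num.Theory.
Local Open Scope ring_scope.

Definition esym (s : seq rat) (j : nat) : rat :=
  \sum_(I : {set 'I_(size s)} | #|I| == j) \prod_(i in I) s`_i.

(* q lies in the r-adic integers: r does not divide the (reduced) denominator. *)
Definition radic_int (r : nat) (q : rat) : Prop := ~~ (r%:Z %| denq q)%Z.

(* a = b (mod r) for r-adic integers a, b: r divides the numerator of a - b. *)
Definition congr_mod (r : nat) (a b : rat) : Prop := (r%:Z %| numq (a - b))%Z.

Definition fermat_residue (f : nat -> rat) (lam : rat) : Prop :=
  exists N : nat, forall r : nat, prime r -> (N <= r)%N ->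
    radic_int r (f r) /\ congr_mod r (f r) lam.

Definition is_fermat (f : nat -> rat) : Prop := exists lam, fermat_residue f lam.

(* Z_(m) = Z[1/2,...,1/(m-1)] for m >= 3, and Z for m <= 2. *)
Definition Zloc (m : nat) (q : rat) : Prop :=
  if (3 <= m)%N then exists (a : int) (k : nat), q = a%:~R / (((m.-1)`!)%:R ^+ k)
  else exists a : int, q = a%:~R.

Definition Zloc_half (m : nat) (q : rat) : Prop :=
  exists (x : rat) (j : nat), Zloc m x /\ q = x / (2%:R ^+ j).

(* H_{l,m}(r), with (r-1)/2 = r./2 for odd r. *)
Definition H (l m r : nat) : rat :=
  let n := r./2 in
  let k := (n + m - l)%N in
  (n`!)%:R / (k`!)%:R * (-1) ^+ m.+1 * esym [seq i%:R | i <- iota 1 k.-1] m.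

From Pilot Require Import Defs.
From mathcomp Require Import all_boot all_algebra finfield ring zify.
Set Implicit Arguments. Unset Strict Implicit. Unset Printing Implicit Defensive.
Import GRing.Theory Num.Theory.
Local Open Scope ring_scope.

(* Write r = 2n + 1 and K = n + m - l.  The classical expansion of Stirling
   numbers of the first kind in second-order Eulerian numbers,
     (2m)! e_m(1, ..., K - 1) = sum_k <<m, k>> (K + k) (K + k - 1) ... (K + k - 2m + 1),
   turns H_{l,m}(r) into +-P(r) / (2^(l+m) (2m)!) for a polynomial P with integer
   coefficients depending only on l and m, so H is a Fermat function with residue
   +-P(0) / (2^(l+m) (2m)!).  The primes dividing (2m)! but not (m+1)! are the p
   with m + 2 <= p <= 2m, and each divides (2m)! once.  For such p, Wilson's
   factorisation X^(p-1) - 1 = (X - 1) ... (X - (p - 1)) over F_p shows that p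
   divides e_m(1, ..., K - 1) once K >= p; comparing the powers of p on both sides
   of K! P(p) = 2^(l+m) n! (2m)! e_m(1, ..., K - 1) gives p | P(p), hence p | P(0).
   So P(0) / (2m)! has only primes <= m + 1 in its denominator. *)

Lemma Euclid_dvdMz (r : nat) (x y : int) : prime r ->
  (r%:Z %| x * y)%Z = (r%:Z %| x)%Z || (r%:Z %| y)%Z.
Proof. by move=> r_pr; rewrite !dvdzE abszM Euclid_dvdM. Qed.

Lemma modz_sum_congr (I : Type) (r : seq I) (P : pred I) (F G : I -> int) d :
  (forall i, P i -> (F i = G i %[mod d])%Z) ->
  (\sum_(i <- r | P i) F i = \sum_(i <- r | P i) G i %[mod d])%Z.
Proof.
move=> eqFG; elim/big_rec2: _ => // i x y /eqFG eqi eqxy.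
by rewrite -modzDm eqi eqxy modzDm.
Qed.

Lemma modzM_congr a a' b b' d : (a = a' %[mod d])%Z -> (b = b' %[mod d])%Z ->
  (a * b = a' * b' %[mod d])%Z.
Proof. by move=> eqa eqb; rewrite -modzMm eqa eqb modzMm. Qed.

Lemma odd_prime_half p : prime p -> (2 < p)%N -> p = (p./2).*2.+1.
Proof.
move=> p_pr p_gt2; have [p2|p_odd] := even_prime p_pr; first by rewrite p2 in p_gt2.
by rewrite -{1}(odd_double_half p) p_odd.
Qed.

Lemma prime_ndvd_fact p t : prime p -> (t < p)%N -> ~~ (p %| t`!)%N.
Proof.
move=> p_pr; elim: t => [|t IH] lt_tp; first by rewrite Euclid_dvd1.
rewrite factS Euclid_dvdM // negb_or IH 1?ltnW // andbT.
by apply/negP => /(dvdn_leq (ltn0Sn _)); lia.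
Qed.

Lemma fact_prime_mul p d : prime p -> (d < p)%N ->
  exists2 A, (p + d)`! = (p * A)%N & ~~ (p %| A)%N.
Proof.
move=> p_pr; have p_gt0 := prime_gt0 p_pr.
elim: d => [|d IH] lt_dp.
  exists p.-1`!; first by rewrite addn0 -[in LHS](prednK p_gt0) factS prednK.
  by apply: prime_ndvd_fact; rewrite // prednK.
have [A fact_pd p_ndvd_A] := IH (ltnW lt_dp).
exists ((p + d).+1 * A)%N; first by rewrite addnS factS fact_pd mulnCA.
rewrite Euclid_dvdM // negb_or p_ndvd_A andbT -addnS dvdn_addr //.
by apply/negP => /(dvdn_leq (ltn0Sn _)); lia.
Qed.

Lemma fact_ffactC a b i j : (a + i = b + j)%N -> (a`! * b ^_ i = b`! * a ^_ j)%N.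
Proof.
move=> eq_ai_bj; have [lt_bi|le_ib] := ltnP b i.
  by rewrite !ffact_small ?muln0 //; lia.
have le_ja : (j <= a)%N by lia.
have eq_bi_aj : (b - i = a - j)%N by lia.
apply/eqP; rewrite -(eqn_pmul2r (fact_gt0 (b - i))) -mulnA ffact_fact //.
by rewrite eq_bi_aj -mulnA ffact_fact // mulnC.
Qed.

Lemma fact_dvdn_mul_fact_exp N m t :
  (forall p, prime p -> (m.+1 < p <= t)%N -> (p %| N)%N) -> (t <= 2 * m)%N ->
  (t`! %| N * (m.+1)`! ^ (2 * t))%N.
Proof.
elim: t => [|t IH] dvd_N le_t2m; first exact: dvd1n.
have IH' : (t`! %| N * (m.+1)`! ^ (2 * t))%N.
  apply: IH => [p p_pr /andP[lt_mp le_pt]|]; last by lia.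
  by apply: dvd_N; rewrite // lt_mp ltnW.
rewrite (_ : (2 * t.+1 = 2 * t + 2)%N); last by lia.
rewrite expnD mulnA.
have [le_tm|lt_mt] := leqP t.+1 m.+1.
  by apply/dvdn_mull/dvdn_mull; rewrite (fact_split le_tm) dvdn_mulr.
rewrite factS.
have [t1_pr|/primePn[lt_t1_2|[d /andP[d_gt1 lt_dt] d_dvd]]] := boolP (prime t.+1).
- rewrite Gauss_dvd ?prime_coprime ?prime_ndvd_fact //.
  apply/andP; split; last exact: dvdn_mulr IH'.
  by rewrite !dvdn_mulr // dvd_N // lt_mt /=.
- lia.
- have [b def_t1] := dvdnP d_dvd.
  have b_gt1 : (1 < b)%N by move: def_t1 lt_dt; case: b => [|[|b]] // ->; lia.
  have le_bm : (b <= m.+1)%N by nia.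
  have le_dm : (d <= m.+1)%N by nia.
  rewrite def_t1 mulnC dvdn_mul //.
  by apply: dvdn_mul; apply: dvdn_fact; lia.
Qed.

(** * Rationals with denominator prime to r *)

Lemma numq_frac_mul (a d : int) : d != 0 ->
  numq (a%:~R / d%:~R : rat) * d = a * denq (a%:~R / d%:~R : rat).
Proof.
move=> d_neq0; apply: (@intr_inj rat); rewrite !intrM numqE.
by field; rewrite intr_eq0.
Qed.

Section RadicIntegers.

Variable r : nat.
Hypothesis r_pr : prime r.

Lemma prime_ndvd_denq q : (r%:Z %| numq q)%Z -> ~~ (r%:Z %| denq q)%Z.
Proof.
rewrite !dvdzE => r_num; apply/negP => r_den.
have : (r %| gcdn `|numq q| `|denq q|)%N by rewrite dvdn_gcd r_num.
by rewrite (eqP (coprime_num_den q)) Euclid_dvd1.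
Qed.

Section FracNdvdDen.

Variables a d : int.
Hypothesis r_ndvd_d : ~~ (r%:Z %| d)%Z.

Let d_neq0 : d != 0.
Proof. by apply: contraNneq r_ndvd_d => ->; rewrite dvdz0. Qed.

Lemma radic_int_frac : radic_int r (a%:~R / d%:~R).
Proof.
apply/negP => r_den; have : (r%:Z %| a * denq (a%:~R / d%:~R))%Z by apply: dvdz_mull.
rewrite -numq_frac_mul // Euclid_dvdMz // (negbTE r_ndvd_d) orbF => r_num.
by move: (prime_ndvd_denq r_num); rewrite r_den.
Qed.

Lemma dvdz_numq_frac : (r%:Z %| a)%Z -> (r%:Z %| numq (a%:~R / d%:~R))%Z.
Proof.
move=> r_a; have : (r%:Z %| a * denq (a%:~R / d%:~R))%Z by apply: dvdz_mulr.
by rewrite -numq_frac_mul // Euclid_dvdMz // (negbTE r_ndvd_d) orbF.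
Qed.

End FracNdvdDen.

Lemma dvdz_numqB x y : (r%:Z %| numq x)%Z -> (r%:Z %| numq y)%Z ->
  (r%:Z %| numq (x - y))%Z.
Proof.
move=> r_x r_y.
have -> : x - y = (numq x * denq y - numq y * denq x)%:~R / (denq x * denq y)%:~R.
  rewrite intrB !intrM -{1}[x]divq_num_den -{1}[y]divq_num_den.
  by field; rewrite !intr_eq0 !denq_neq0.
apply: dvdz_numq_frac; last by rewrite rpredB ?dvdz_mulr.
by rewrite Euclid_dvdMz // negb_or !prime_ndvd_denq.
Qed.

End RadicIntegers.

Lemma eq0_dvdz_numq (z : rat) N :
  (forall r, prime r -> (N <= r)%N -> (r%:Z %| numq z)%Z) -> z = 0.
Proof.
move=> dvd_num; have [r lt_r r_pr] := prime_above (N + `|numq z|)%N.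
have := dvd_num r r_pr (leq_trans (leq_addr _ _) (ltnW lt_r)); rewrite dvdzE /=.
have [num0|num_gt0] := posnP `|numq z|%N.
  by move=> _; apply/eqP; rewrite -numq_eq0 -absz_eq0 num0.
by move/(dvdn_leq num_gt0); lia.
Qed.

Lemma fermat_residue_unique f a b : fermat_residue f a -> fermat_residue f b -> a = b.
Proof.
move=> [Na res_a] [Nb res_b]; apply/eqP; rewrite -subr_eq0; apply/eqP.
apply: (@eq0_dvdz_numq _ (Na + Nb)) => r r_pr le_r.
have [_ cong_a] := res_a r r_pr ltac:(lia); have [_ cong_b] := res_b r r_pr ltac:(lia).
by have := dvdz_numqB r_pr cong_b cong_a; rewrite /congr_mod opprB addrC addrA subrK.
Qed.

(** * Elementary symmetric functions of 1, ..., N *)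

Fixpoint esym_iota (N a : nat) : nat :=
  match N, a with
  | 0, _ => a == 0%N
  | _.+1, 0 => 1
  | N'.+1, a'.+1 => esym_iota N' a + N * esym_iota N' a'
  end.

Lemma esym_iota0 N : esym_iota N 0 = 1%N.
Proof. by case: N. Qed.

Lemma esym_iotaSS N a :
  esym_iota N.+1 a.+1 = (esym_iota N a.+1 + N.+1 * esym_iota N a)%N.
Proof. by []. Qed.

Lemma esym_iota_small N a : (N < a)%N -> esym_iota N a = 0%N.
Proof.
elim: N a => [|N IH] [|a] //= ltNa.
by rewrite !IH ?muln0 // ltnW.
Qed.

Definition prodXsub_iota (R : comNzRingType) (N : nat) : {poly R} :=
  \prod_(i <- iota 1 N) ('X - i%:R%:P).

Lemma prodXsub_iotaS (R : comNzRingType) N :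
  prodXsub_iota R N.+1 = prodXsub_iota R N * ('X - N.+1%:R%:P).
Proof. by rewrite /prodXsub_iota -(addn1 N) iotaD big_cat big_seq1 add1n addn1. Qed.

Lemma size_prodXsub_iota (R : comNzRingType) N : size (prodXsub_iota R N) = N.+1.
Proof. by rewrite size_prod_XsubC size_iota. Qed.

Lemma coef_prodXsub_iota (R : comNzRingType) N a : (a <= N)%N ->
  (prodXsub_iota R N)`_(N - a) = (-1) ^+ a * (esym_iota N a)%:R.
Proof.
elim: N a => [|N IH] a.
  by rewrite leqn0 => /eqP ->; rewrite /prodXsub_iota big_nil coefC mul1r.
rewrite prodXsub_iotaS mulrBr coefB coefMX coefMC.
case: a => [_|a]; rewrite ?subSS.
  rewrite subn0 [X in _ - X * _]nth_default ?size_prodXsub_iota // mul0r subr0.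
  by have := IH 0%N (leq0n N); rewrite subn0 esym_iota0.
rewrite ltnS leq_eqVlt => /predU1P[->|ltaN].
  have := IH N (leqnn N); rewrite !subnn /= (esym_iota_small (ltnSn N)) => ->.
  rewrite exprS natrM; ring.
have := IH a (ltnW ltaN); rewrite -(subnSK ltaN) /= => ->.
rewrite IH // exprS natrD natrM; ring.
Qed.

Lemma esym_iotaE N a :
  Defs.esym [seq i%:R | i <- iota 1 N] a = (esym_iota N a)%:R.
Proof.
set s : seq rat := map _ _; have size_s : size s = N by rewrite size_map size_iota.
have [leaN|ltNa] := leqP a N; last first.
  rewrite esym_iota_small // /Defs.esym big_pred0 // => I.
  by apply/negbTE; rewrite neq_ltn (leq_ltn_trans (max_card _)) // card_ord size_s.
have := @coef_prod_XsubC _ s (size s - a)%N (leq_subr _ _).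
rewrite subKn => [coef_s|]; last by rewrite size_s.
apply: (mulfI (x := (-1) ^+ a)); first by rewrite signr_eq0.
rewrite /Defs.esym -coef_s size_s big_map.
exact: coef_prodXsub_iota.
Qed.

Lemma perm_iota_enum_Fp p : prime p ->
  perm_eq [seq i%:R : 'F_p | i <- iota 0 p] (enum 'F_p).
Proof.
move=> p_pr; have lt_ord (x : 'F_p) : (x < p)%N by rewrite -[p in (_ < p)%N](Fp_cast p_pr).
apply: uniq_perm; rewrite ?enum_uniq //.
  rewrite map_inj_in_uniq ?iota_uniq // => i j; rewrite !mem_iota !add0n => ltip ltjp.
  by move/(congr1 val); rewrite /= !val_Fp_nat // !modn_small.
move=> x; rewrite mem_enum; apply/mapP; exists (val x); first by rewrite mem_iota add0n lt_ord.
by apply: val_inj; rewrite /= val_Fp_nat // modn_small.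
Qed.

Lemma prodXsub_iota_Fp p : prime p -> prodXsub_iota 'F_p p.-1 = 'X^(p.-1) - 1.
Proof.
move=> p_pr; have p_gt0 := prime_gt0 p_pr.
apply: (mulfI (x := 'X)); first by rewrite polyX_eq0.
have -> : 'X * prodXsub_iota 'F_p p.-1 = \prod_(i <- iota 0 p) ('X - i%:R%:P).
  by rewrite -(prednK p_gt0) /= big_cons subr0.
rewrite mulrBr mulr1 -exprS prednK // -[X in 'X^X](card_Fp p_pr) finField_genPoly.
rewrite -(big_map (fun i => i%:R) xpredT (fun x => 'X - x%:P)).
by rewrite (perm_big _ (perm_iota_enum_Fp p_pr)) enumT.
Qed.

Lemma prime_dvd_esym_iota_pred p a : prime p -> (0 < a <= p - 2)%N ->
  (p %| esym_iota p.-1 a)%N.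
Proof.
move=> p_pr /andP[a_gt0 le_a_p2]; have p_gt1 := prime_gt1 p_pr.
have := @coef_prodXsub_iota 'F_p p.-1 a ltac:(lia).
rewrite prodXsub_iota_Fp // coefB coefXn coefC.
rewrite (_ : (p.-1 - a == p.-1)%N = false); last by apply/eqP; lia.
rewrite (_ : (p.-1 - a == 0)%N = false); last by apply/eqP; lia.
rewrite subr0 => /esym/eqP; rewrite mulf_eq0 signr_eq0 /=.
by rewrite (dvdn_pcharf (pchar_Fp p_pr)).
Qed.

Lemma prime_dvd_esym_iota p d a : prime p -> (0 < a <= p - 2)%N -> (d <= a)%N ->
  (p %| esym_iota (p.-1 + d) a)%N.
Proof.
move=> p_pr; have p_gt1 := prime_gt1 p_pr.
elim: d a => [|d IH] a a_range le_d_a; first by rewrite addn0 prime_dvd_esym_iota_pred.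
case: a a_range le_d_a => [//|a] a_range le_d_a.
rewrite addnS esym_iotaSS dvdn_add //; first by apply: IH; lia.
have [a0|a_gt0] := posnP a.
  by rewrite (_ : (p.-1 + d).+1 = p) ?dvdn_mulr //; lia.
by rewrite dvdn_mull // IH //; lia.
Qed.

(** * Falling factorials and second-order Eulerian numbers *)

(* The step [s = 2] serves the substitution n = (r - 1) / 2. *)
Definition ffactz (s y : int) (j : nat) : int := \prod_(i < j) (y - s * i%:Z).

Lemma ffactz0 s y : ffactz s y 0 = 1.
Proof. exact: big_ord0. Qed.

Lemma ffactzSr s y j : ffactz s y j.+1 = ffactz s y j * (y - s * j%:Z).
Proof. exact: big_ord_recr. Qed.

Lemma ffactzSl s y j : ffactz s (y + s) j.+1 = (y + s) * ffactz s y j.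
Proof.
rewrite /ffactz big_ord_recl mulr0 subr0; congr (_ * _).
by apply: eq_bigr => i _; rewrite /= /bump add1n intS; ring.
Qed.

Lemma ffactzD s y a b : ffactz s y (a + b) = ffactz s y a * ffactz s (y - s * a%:Z) b.
Proof.
elim: b => [|b IH]; first by rewrite addn0 ffactz0 mulr1.
by rewrite addnS !ffactzSr IH PoszD; ring.
Qed.

Lemma ffactzZ c s y j : ffactz (c * s) (c * y) j = c ^+ j * ffactz s y j.
Proof.
rewrite /ffactz -[in c ^+ j](card_ord j) -prodr_const -big_split /=.
by apply: eq_bigr => i _; ring.
Qed.

Lemma ffactz_nat n j : ffactz 1 n%:Z j = (n ^_ j)%:Z.
Proof.
elim: j => [|j IH]; first by rewrite ffactz0.
rewrite ffactzSr ffactnSr IH PoszM mul1r.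
have [le_jn|lt_nj] := leqP j n; first by rewrite subzn.
by rewrite ffact_small // mul0r.
Qed.

Lemma ffactz_mod s d y j : (ffactz s (d + y) j = ffactz s y j %[mod d])%Z.
Proof.
elim: j => [|j IH]; first by rewrite !ffactz0.
by rewrite !ffactzSr -modzMm IH -addrA modzDl modzMm.
Qed.

Lemma ffactz_diff y j : ffactz 1 (y + 1) j.+1 - ffactz 1 y j.+1 = j.+1%:Z * ffactz 1 y j.
Proof. by rewrite ffactzSl ffactzSr intS; ring. Qed.

Fixpoint eulerian2 (m k : nat) : int :=
  match m with
  | 0 => (k == 0)%:Z
  | m'.+1 => k.+1%:Z * eulerian2 m' k +
      (if k is k'.+1 then ((2 * m').+1%:Z - k%:Z) * eulerian2 m' k' else 0)
  end.

Lemma eulerian2_small m k : (m < k)%N -> eulerian2 m k = 0.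
Proof.
elim: m k => [|m IH] [|k] //= lt_mk.
by rewrite !IH ?mulr0 ?addr0 // ltnW.
Qed.

Lemma eulerian2S m k : eulerian2 m.+1 k = k.+1%:Z * eulerian2 m k +
  (if k is k'.+1 then ((2 * m).+1%:Z - k%:Z) * eulerian2 m k' else 0).
Proof. by []. Qed.

Lemma eulerian2_diag m : eulerian2 m.+1 m.+1 = 0.
Proof.
elim: m => [|m IH] //.
by rewrite eulerian2S eulerian2_small // IH !mulr0 addr0.
Qed.

Lemma eulerian2_sum_ffactzS M (y : int) :
  \sum_(0 <= k < M.+2) eulerian2 M.+1 k * ffactz 1 (y + k%:Z) (2 * M).+1 =
  (2 * M).+1%:Z * y * \sum_(0 <= k < M.+1) eulerian2 M k * ffactz 1 (y + k%:Z) (2 * M).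
Proof.
under eq_bigr => k _ do rewrite eulerian2S mulrDl.
rewrite big_split /= big_nat_recr //= eulerian2_small // mulr0 mul0r addr0.
rewrite [X in _ + X]big_nat_recl //= mul0r add0r -big_split mulr_sumr /=.
apply: eq_big_nat => k /andP[_ le_kM].
have -> : y + k.+1%:Z = (y + k%:Z) + 1 by rewrite intS; ring.
rewrite ffactzSl (ffactzSr 1 (y + k%:Z) (2 * M)) !intS PoszM; ring.
Qed.

Lemma esym_iota_eulerian2 m K :
  ((2 * m)`!)%:Z * (esym_iota K.-1 m)%:Z =
  \sum_(0 <= k < m.+1) eulerian2 m k * ffactz 1 (K%:Z + k%:Z) (2 * m).
Proof.
have base m' K' : (K' <= 1)%N -> ((2 * m')`!)%:Z * (esym_iota K'.-1 m')%:Z =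
    \sum_(0 <= k < m'.+1) eulerian2 m' k * ffactz 1 (K'%:Z + k%:Z) (2 * m').
  move=> le_K'1; rewrite (_ : K'.-1 = 0%N); last by lia.
  case: m' => [|M]; first by rewrite big_nat1 muln0 ffactz0.
  rewrite [esym_iota _ _]/= mulr0 big_nat_recr // eulerian2_diag mul0r big1_seq // => k.
  rewrite mem_iota add0n => lt_kM; rewrite -PoszD ffactz_nat ffact_small ?mulr0 //.
  lia.
elim: K m => [|K IH] m; first exact: base.
case: K IH => [|K] IH; first exact: base.
case: m => [|M] {base}; first by rewrite big_nat1 esym_iota0 ffactz0.
have double_succ : (2 * M.+1 = (2 * M).+2)%N by lia.
have IH_M1 := IH M.+1; rewrite double_succ in IH_M1 *.
rewrite esym_iotaSS PoszD PoszM mulrDr IH_M1.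
have -> : ((2 * M).+2`!)%:Z * (K.+1%:Z * (esym_iota K M)%:Z) =
    (2 * M).+2%:Z * ((2 * M).+1%:Z * K.+1%:Z * (((2 * M)`!)%:Z * (esym_iota K M)%:Z)).
  by rewrite !factS !PoszM; ring.
rewrite IH -eulerian2_sum_ffactzS mulr_sumr.
apply/eqP; rewrite addrC eq_sym -subr_eq -sumrB; apply/eqP/eq_bigr => k _.
rewrite -mulrBr (_ : K.+2%:Z + k%:Z = (K.+1%:Z + k%:Z) + 1) ?ffactz_diff; last by lia.
ring.
Qed.

(** * The numerator of H as a polynomial *)

Definition hnum (l m : nat) (n : int) : int :=
  \sum_(0 <= k < m.+1)
    eulerian2 m k * ffactz 1 (n + (m%:Z - l%:Z) + k%:Z) k * ffactz 1 n (l + m - k).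

Lemma hnumE l m n : (l <= n + m)%N ->
  ((n + m - l)`!)%:Z * hnum l m n%:Z =
  (n`!)%:Z * ((2 * m)`!)%:Z * (esym_iota (n + m - l).-1 m)%:Z.
Proof.
move=> le_l_nm; set K := (n + m - l)%N.
rewrite -mulrA esym_iota_eulerian2 /hnum !mulr_sumr.
apply: eq_big_nat => k /andP[_ lt_km].
have -> : n%:Z + (m%:Z - l%:Z) + k%:Z = (K + k)%N%:Z by rewrite /K; lia.
have split_2m : (2 * m = k + (2 * m - k))%N by lia.
rewrite -PoszD split_2m ffactzD (_ : (K + k)%N%:Z - 1 * k%:Z = K%:Z); last by lia.
have swap := @fact_ffactC K n (l + m - k) (2 * m - k) ltac:(rewrite /K; lia).
rewrite !ffactz_nat.
transitivity (eulerian2 m k * ((K + k) ^_ k)%:Z * (K`! * n ^_ (l + m - k))%N%:Z).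
  by rewrite PoszM; ring.
by rewrite swap PoszM; ring.
Qed.

Lemma hnum_eq0 l m n : (n + m < l)%N -> hnum l m n%:Z = 0.
Proof.
move=> lt_nm_l; rewrite /hnum big1_seq // => k; rewrite mem_iota add0n => lt_km.
by rewrite ffactz_nat ffact_small ?mulr0 //; lia.
Qed.

Definition hnum_r (l m : nat) (t : int) : int :=
  \sum_(0 <= k < m.+1)
    eulerian2 m k * ffactz 2 (t + (2 * (m%:Z - l%:Z + k%:Z) - 1)) k *
    ffactz 2 (t - 1) (l + m - k).

Lemma hnum_r_odd l m (n : int) : hnum_r l m (2 * n + 1) = 2 ^+ (l + m) * hnum l m n.
Proof.
rewrite /hnum_r /hnum mulr_sumr; apply: eq_big_nat => k /andP[_ lt_km].
have -> : 2 * n + 1 + (2 * (m%:Z - l%:Z + k%:Z) - 1) = 2 * (n + (m%:Z - l%:Z) + k%:Z).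
  by ring.
have ffactz_double y j : ffactz 2 (2 * y) j = 2 ^+ j * ffactz 1 y j.
  by rewrite -ffactzZ mulr1.
have -> : 2 ^+ (l + m) = 2 ^+ k * 2 ^+ (l + m - k) :> int.
  by rewrite -exprD subnKC //; lia.
by rewrite addrK !ffactz_double; ring.
Qed.

Lemma hnum_r_mod l m d : (hnum_r l m d = hnum_r l m 0 %[mod d])%Z.
Proof.
apply: modz_sum_congr => k _; rewrite !add0r.
by do 2?apply: modzM_congr; rewrite ?ffactz_mod.
Qed.

Lemma prime_dvd_hnum l m p : prime p -> (m + 2 <= p <= 2 * m)%N ->
  (p%:Z %| hnum l m (p./2)%:Z)%Z.
Proof.
move=> p_pr /andP[le_m2p le_p2m]; set n := p./2.
have def_p : p = n.*2.+1 by apply: odd_prime_half => //; lia.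
have p_fact2m : (p%:Z %| ((2 * m)`!)%:Z)%Z by rewrite dvdzE dvdn_fact ?prime_gt0.
have [lt_nm_l|le_l_nm] := ltnP (n + m) l; first by rewrite hnum_eq0 ?dvdz0.
have := hnumE le_l_nm; set K := (n + m - l)%N => eqK.
have [lt_Kp|le_pK] := ltnP K p.
  have : (p%:Z %| (K`!)%:Z * hnum l m n)%Z by rewrite eqK dvdz_mulr ?dvdz_mull.
  by rewrite Euclid_dvdMz // dvdzE (negbTE (prime_ndvd_fact p_pr lt_Kp)).
have [A fact_K p_ndvd_A] := @fact_prime_mul p (K - p) p_pr ltac:(lia).
have p_esym : (p %| esym_iota K.-1 m)%N.
  rewrite (_ : K.-1 = p.-1 + (K - p))%N; last by lia.
  by apply: prime_dvd_esym_iota => //; lia.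
(* p divides K! once but (2m)! e_m(1, ..., K - 1) twice. *)
have : (p%:Z * p%:Z %| p%:Z * (A%:Z * hnum l m n))%Z.
  by rewrite mulrA -PoszM -fact_K ?subnKC // eqK -mulrA dvdz_mull // dvdz_mul.
rewrite dvdz_mul2l ?Euclid_dvdMz //; last by rewrite eqz_nat -lt0n prime_gt0.
by rewrite [(_ %| A%:Z)%Z]dvdzE (negbTE p_ndvd_A).
Qed.

Lemma prime_dvd_hnum_r0 l m p : prime p -> (m + 2 <= p <= 2 * m)%N ->
  (p%:Z %| hnum_r l m 0)%Z.
Proof.
move=> p_pr p_range; apply/dvdz_mod0P; rewrite -(hnum_r_mod l m p); apply/dvdz_mod0P.
have odd_p : p%:Z = 2 * (p./2)%:Z + 1.
  by rewrite {1}(odd_prime_half p_pr) -?muln2; lia.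
by rewrite [in hnum_r _ _ _]odd_p hnum_r_odd dvdz_mull // prime_dvd_hnum.
Qed.

Definition hden (l m : nat) : int := 2 ^+ (l + m) * ((2 * m)`!)%:Z.

Lemma H_frac l m r : prime r -> (2 * (l + m) + 3 <= r)%N ->
  H l m r = ((-1) ^+ m.+1 * hnum_r l m r%:Z)%:~R / (hden l m)%:~R.
Proof.
move=> r_pr le_r; rewrite /H /=; set n := r./2; set K := (n + m - l)%N.
have odd_r : r%:Z = 2 * n%:Z + 1 by rewrite {1}(odd_prime_half r_pr) -?muln2; lia.
have le_l_nm : (l <= n + m)%N by lia.
have := congr1 (intr : int -> rat) (hnumE le_l_nm); rewrite -/K !intrM => eqK.
have fact_neq0 k : (k`!)%:~R != 0 :> rat by rewrite intr_eq0 eqz_nat -lt0n fact_gt0.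
rewrite esym_iotaE odd_r hnum_r_odd !intrM rmorphXn rmorphN1 rmorphXn.
have -> : (hnum l m n)%:~R =
    (n`!)%:~R * ((2 * m)`!)%:~R * (esym_iota K.-1 m)%:~R / (K`!)%:~R :> rat.
  by apply: (mulfI (fact_neq0 K)); rewrite eqK; field; rewrite fact_neq0.
by field; rewrite !pnatr_eq0 -!lt0n !fact_gt0 expf_neq0.
Qed.

Definition residue (l m : nat) : rat :=
  ((-1) ^+ m.+1 * hnum_r l m 0)%:~R / (hden l m)%:~R.

Lemma prime_ndvd_hden l m r : prime r -> (2 * (l + m) + 3 <= r)%N ->
  ~~ (r%:Z %| hden l m)%Z.
Proof.
move=> r_pr le_r; rewrite /hden Euclid_dvdMz // !dvdzE abszX Euclid_dvdX // negb_or.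
rewrite prime_ndvd_fact ?andbT //; last by lia.
by apply/negP => /andP[/(dvdn_leq (isT : (0 < 2)%N)) le_r2 _]; lia.
Qed.

Lemma fermat_residue_H l m : fermat_residue (H l m) (residue l m).
Proof.
exists (2 * (l + m) + 3)%N => r r_pr le_r.
have r_ndvd_hden := prime_ndvd_hden r_pr le_r.
rewrite H_frac //; split; first exact: radic_int_frac.
rewrite /congr_mod /residue -mulrBl -rmorphB /= -mulrBr.
apply: dvdz_numq_frac => //; apply: dvdz_mull.
by rewrite -eqz_mod_dvd hnum_r_mod.
Qed.

Lemma Zloc_frac_fact m (a : int) :
  (forall p, prime p -> (m + 2 <= p <= 2 * m)%N -> (p%:Z %| a)%Z) ->
  Zloc (m + 2) (a%:~R / ((2 * m)`!)%:R).
Proof.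
rewrite /Zloc; case: m => [_|m dvd_a]; first by exists a; rewrite muln0 divr1.
rewrite !addn2 /=.
have := @fact_dvdn_mul_fact_exp `|a| m.+1 (2 * m.+1).
case/(_ _ (leqnn _))/dvdnP => [p p_pr p_range|c def_c].
  by move: (dvd_a p p_pr); rewrite dvdzE; apply; lia.
exists ((-1) ^+ (a < 0)%R * c%:Z), (2 * (2 * m.+1))%N.
rewrite {1}[a]intEsign !intrM -!mulrA; congr (_ * _).
have fact_neq0 k : (k`!)%:R != 0 :> rat by rewrite pnatr_eq0 -lt0n fact_gt0.
apply/eqP; rewrite eqr_div ?expf_neq0 //; apply/eqP.
by rewrite -natrX -!natrM def_c.
Qed.

Lemma Zloc_half_residue l m : Zloc_half (m + 2) (residue l m).
Proof.
exists (((-1) ^+ m.+1 * hnum_r l m 0)%:~R / ((2 * m)`!)%:R), (l + m)%N; split.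
  by apply: Zloc_frac_fact => p p_pr p_range; rewrite dvdz_mull // prime_dvd_hnum_r0.
by rewrite /residue /hden intrM rmorphXn -mulrA -invfM [_ * 2 ^+ _]mulrC.
Qed.

Theorem lemma2p4 (l m : nat) :
  is_fermat (H l m) /\
  forall lam : rat, fermat_residue (H l m) lam -> Zloc_half (m + 2) lam.
Proof.
split; first by exists (residue l m); exact: fermat_residue_H.
by move=> lam /(fermat_residue_unique (fermat_residue_H l m)) <-; exact: Zloc_half_residue.
Qed.
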